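(* Let $m\in\mathbb{N}$, $d_1,\dots,d_m\in\mathbb{R}$, $\alpha_1,\dots,\alpha_m>0$, $\beta>0$, $\nu\in\mathbb{R}$, and let $G(\gamma)=\sum_{i=1}^{m}\frac{d_i\Gamma(1+\gamma)}{\Gamma(1+\gamma-\alpha_i)}$. Let $\gamma>-1$ be a root of multiplicity two of $G(\gamma)=\nu^2$ (i.e. $G(\gamma)=\nu^2$, $G'(\gamma)=0$, $G''(\gamma)\neq0$), and suppose there is no positive integer $n$ such that $\gamma+\beta n$ is another root of $G=\nu^2$. For $n\ge1$ set $$A_n=\sum_{i=1}^{m}\frac{d_i\Gamma(1+\gamma+\beta n)}{\Gamma(1+\gamma+\beta n-\alpha_i)},\qquad B_n=\sum_{i=1}^{m}\frac{d_i\Gamma(1+\gamma+\beta n)}{\Gamma(1+\gamma+\beta n-\alpha_i)}\big[\psi(1+\gamma+\beta n)-\psi(1+\gamma+\beta n-\alpha_i)\big],$$ let $c_0^1,c_0^2$ be arbitrary constants and define recursively for $n\ge0$ $$c_{n+1}^1=-\frac{c_n^1}{A_{n+1}-\nu^2},\qquad c_{n+1}^2=-\frac{c_n^2+c_{n+1}^1B_{n+1}}{A_{n+1}-\nu^2}.$$ Then the series $$u(x)=\ln x\sum_{n=0}^{\infty}c_n^1x^{\gamma+\beta n}+\sum_{n=0}^{\infty}c_n^2x^{\gamma+\beta n}$$ converges pointwise for every $x>0$.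
   Context: $\psi=\Gamma'/\Gamma$ is the digamma function. Quotients of Gamma functions are understood with $1/\Gamma$ entire. This series is the candidate second (logarithmic) solution of $\sum_{i=1}^{m}d_i x^{\alpha_i}D^{\alpha_i}u(x)+(x^\beta-\nu^2)u(x)=0$ with Caputo derivatives $D^{\alpha}$, associated with a double root of the characteristic equation. *)

From Stdlib Require Import Reals.
From Coquelicot Require Import Coquelicot.
Open Scope R_scope.

Fixpoint sumR (m : nat) (f : nat -> R) : R :=
  match m with O => 0 | S k => sumR k f + f k end.

(* Reciprocal Gamma function 1/Gamma, an entire function, defined by Gauss'
   product formula: 1/Gamma(x) = lim_n x(x+1)...(x+n) / (n! n^x).
   It vanishes exactly at the non-positive integers. *)
Fixpoint pochR (x : R) (n : nat) : R :=
  match n with O => x | S k => pochR x k * (x + INR (S k)) end.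

Definition rgamma (x : R) : R :=
  real (Lim_seq (fun n => pochR x (S n) / (INR (Factorial.fact (S n)) * exp (x * ln (INR (S n)))))).

(* Quotient Gamma(a)/Gamma(b), understood with 1/Gamma entire. *)
Definition gratio (a b : R) : R := rgamma b / rgamma a.

(* Gamma(a)/Gamma(b) * (psi(a) - psi(b)), psi = Gamma'/Gamma the digamma function,
   understood with 1/Gamma entire: since psi = -(1/Gamma)'/(1/Gamma), this equals
   ((1/Gamma)'(b) (1/Gamma)(a) - (1/Gamma)(b) (1/Gamma)'(a)) / (1/Gamma)(a)^2. *)
Definition gratio_psi (a b : R) : R :=
  (Derive rgamma b * rgamma a - rgamma b * Derive rgamma a) / (rgamma a ^ 2).

Definition Gfun (m : nat) (d alpha : nat -> R) (g : R) : R :=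
  sumR m (fun i => d i * gratio (1 + g) (1 + g - alpha i)).

Definition A_n (m : nat) (d alpha : nat -> R) (beta gamma : R) (n : nat) : R :=
  Gfun m d alpha (gamma + beta * INR n).

Definition B_n (m : nat) (d alpha : nat -> R) (beta gamma : R) (n : nat) : R :=
  sumR m (fun i => d i * gratio_psi (1 + gamma + beta * INR n)
                                     (1 + gamma + beta * INR n - alpha i)).

Fixpoint coef1 (m : nat) (d alpha : nat -> R) (beta gamma nu c10 : R) (n : nat) : R :=
  match n with
  | O => c10
  | S k => - coef1 m d alpha beta gamma nu c10 k / (A_n m d alpha beta gamma (S k) - nu ^ 2)
  end.

Fixpoint coef2 (m : nat) (d alpha : nat -> R) (beta gamma nu c10 c20 : R) (n : nat) : R :=
  match n with
  | O => c20
  | S k => - (coef2 m d alpha beta gamma nu c10 c20 k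
              + coef1 m d alpha beta gamma nu c10 (S k) * B_n m d alpha beta gamma (S k))
           / (A_n m d alpha beta gamma (S k) - nu ^ 2)
  end.

(* For x > 0, Gauss's product gives 1/Gamma(x) = exp l(x), where l is the limit of
   explicit sums of logarithms, and l' = -psi.  Elementary bounds on ln then show, for
   0 < s and a large,
     Gamma(a)/Gamma(a-s) <= a^s,      Gamma(a)/Gamma(a-s) >= (a/2)^s / e,
     |Gamma(a)/Gamma(a-s) (psi(a) - psi(a-s))| <= (1/s + 1) a^s.
   As G'' <> 0, G does not vanish identically, so after merging equal alpha_i a largest
   exponent p keeps a nonzero coefficient; with a = 1 + gamma + beta n this gives
   |A_n - nu^2| >= kappa a^p -> oo and |B_n| = O(|A_n - nu^2|).  Writing r = x^beta,
   the weight (|c^2_n| + (4K+1) |c^1_n|) r^n is then eventually halved by each step of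
   the recurrences, so both series are dominated by a geometric series. *)

From Stdlib Require Import Reals Lra Lia List.
From Coquelicot Require Import Coquelicot.
Open Scope R_scope.

Lemma ln_sub_bounds (p q : R) : 0 < p -> 0 < q ->
  (p - q) / p <= ln p - ln q <= (p - q) / q.
Proof.
  intros Hp Hq.
  assert (ln_le_sub1 : forall w, 0 < w -> ln w <= w - 1).
  { intros w Hw. pose proof (exp_ineq1_le (ln w)) as H. rewrite exp_ln in H; lra. }
  split.
  - pose proof (ln_le_sub1 (q / p) (Rdiv_lt_0_compat _ _ Hq Hp)) as H.
    rewrite ln_div in H by lra.
    replace (q / p - 1) with (- ((p - q) / p)) in H by (field; lra). lra.
  - pose proof (ln_le_sub1 (p / q) (Rdiv_lt_0_compat _ _ Hp Hq)) as H.
    rewrite ln_div in H by lra.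
    replace (p / q - 1) with ((p - q) / q) in H by (field; lra). lra.
Qed.

Lemma exp_le_exp x y : x <= y -> exp x <= exp y.
Proof. intros [H | ->]; [left; apply exp_increasing, H | right; reflexivity]. Qed.

Lemma is_lim_seq_inv_INR_S : is_lim_seq (fun n => / INR (S n)) 0.
Proof.
  apply (is_lim_seq_incr_1 (fun n => / INR n)).
  exact (is_lim_seq_inv _ _ is_lim_seq_INR ltac:(discriminate)).
Qed.

Lemma ex_finite_lim_seq_of_step_bound (u : nat -> R) (C : R) :
  (forall n, Rabs (u (S n) - u n) <= C * (/ INR (S n) - / INR (S (S n)))) ->
  ex_finite_lim_seq u.
Proof.
  intros H.
  assert (HC : forall c, is_lim_seq (fun n => c * / INR (S n)) 0).
  { intros c. replace (Finite 0) with (Rbar_mult c 0) by (simpl; f_equal; ring).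
    apply is_lim_seq_scal_l, is_lim_seq_inv_INR_S. }
  destruct (ex_lim_seq_adj (fun n => u n - C * / INR (S n)) (fun n => u n + C * / INR (S n)))
    as [[l Hl] _].
  - intros n. specialize (H n). apply Rabs_le_between in H. lra.
  - intros n. specialize (H n). apply Rabs_le_between in H. lra.
  - apply (is_lim_seq_ext (fun n => (2 * C) * / INR (S n))); [intros; ring | apply HC].
  - exists (l + 0).
    apply (is_lim_seq_ext (fun n => (u n - C * / INR (S n)) + C * / INR (S n))); [intros; ring |].
    apply is_lim_seq_plus'; [exact Hl | apply HC].
Qed.

Lemma inv_sub_inv_shift_le (x s : R) : 0 <= x -> 0 < s ->
  / s - / (x + s + 1) <= (x + 1) * (/ s - / (s + 1)).
Proof.
  intros Hx Hs.
  replace (/ s - / (x + s + 1)) with ((x + 1) * / (s * (x + s + 1))) by (field; lra).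
  replace (/ s - / (s + 1)) with (/ (s * (s + 1))) by (field; lra).
  apply Rmult_le_compat_l; [lra |].
  apply Rinv_le_contravar; [apply Rmult_lt_0_compat; lra |].
  apply Rmult_le_compat_l; lra.
Qed.

(* [lrgamma_seq x n] is the logarithm of the n-th Gauss product in [rgamma x]; for x > 0
   the limits [lrgamma] and [ndigamma] below are ln (1/Gamma) and -psi. *)
Definition lrgamma_seq (x : R) (n : nat) : R :=
  sum_f_R0 (fun k => ln (x + INR k)) (S n) - ln (INR (Factorial.fact (S n)))
  - x * ln (INR (S n)).

Definition ndigamma_seq (x : R) (n : nat) : R :=
  sum_f_R0 (fun k => / (x + INR k)) (S n) - ln (INR (S n)).

Lemma lrgamma_seq_step_bound x n : 0 < x ->
  Rabs (lrgamma_seq x (S n) - lrgamma_seq x n)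
  <= x * (x + 1) * (/ INR (S n) - / INR (S (S n))).
Proof.
  intros Hx.
  assert (E : lrgamma_seq x (S n) - lrgamma_seq x n
              = (ln (x + INR (S (S n))) - ln (INR (S (S n))))
                - x * (ln (INR (S (S n))) - ln (INR (S n)))).
  { unfold lrgamma_seq.
    change (Factorial.fact (S (S n))) with (S (S n) * Factorial.fact (S n))%nat.
    rewrite mult_INR, ln_mult by (apply lt_0_INR; try lia; apply Factorial.lt_O_fact).
    rewrite tech5. ring. }
  rewrite E, (S_INR (S n)).
  set (s := INR (S n)).
  assert (Hs : 0 < s) by (apply lt_0_INR; lia).
  destruct (ln_sub_bounds (x + (s + 1)) (s + 1)) as [A1 A2]; [lra | lra |].
  destruct (ln_sub_bounds (s + 1) s) as [B1 B2]; [lra | lra |].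
  replace (x + (s + 1) - (s + 1)) with x in A1, A2 by ring.
  replace (s + 1 - s) with 1 in B1, B2 by ring.
  apply (Rmult_le_compat_l x) in B1, B2; try lra.
  pose proof (Rmult_le_compat_l x _ _ (Rlt_le _ _ Hx)
                (inv_sub_inv_shift_le x s (Rlt_le _ _ Hx) Hs)) as C.
  replace (x + (s + 1)) with (x + s + 1) in * by ring.
  unfold Rdiv in *. rewrite Rmult_1_l in *.
  apply Rabs_le; split; lra.
Qed.

Lemma ndigamma_seq_step_bound x n : 0 < x ->
  Rabs (ndigamma_seq x (S n) - ndigamma_seq x n)
  <= (x + 1) * (/ INR (S n) - / INR (S (S n))).
Proof.
  intros Hx.
  assert (E : ndigamma_seq x (S n) - ndigamma_seq x n
              = / (x + INR (S (S n))) - (ln (INR (S (S n))) - ln (INR (S n)))).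
  { unfold ndigamma_seq. rewrite tech5. ring. }
  rewrite E, (S_INR (S n)).
  set (s := INR (S n)).
  assert (Hs : 0 < s) by (apply lt_0_INR; lia).
  destruct (ln_sub_bounds (s + 1) s) as [B1 B2]; [lra | lra |].
  replace (s + 1 - s) with 1 in B1, B2 by ring.
  pose proof (inv_sub_inv_shift_le x s (Rlt_le _ _ Hx) Hs) as C.
  assert (/ (x + (s + 1)) <= / (s + 1)) by (apply Rinv_le_contravar; lra).
  replace (x + (s + 1)) with (x + s + 1) in * by ring.
  unfold Rdiv in *. rewrite Rmult_1_l in *.
  apply Rabs_le; split; lra.
Qed.

Definition lrgamma (x : R) : R := real (Lim_seq (lrgamma_seq x)).
Definition ndigamma (x : R) : R := real (Lim_seq (ndigamma_seq x)).

Lemma is_lim_seq_lrgamma x : 0 < x -> is_lim_seq (lrgamma_seq x) (lrgamma x).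
Proof.
  intros Hx. apply Lim_seq_correct', (ex_finite_lim_seq_of_step_bound _ (x * (x + 1))).
  intros n. apply lrgamma_seq_step_bound, Hx.
Qed.

Lemma is_lim_seq_ndigamma x : 0 < x -> is_lim_seq (ndigamma_seq x) (ndigamma x).
Proof.
  intros Hx. apply Lim_seq_correct', (ex_finite_lim_seq_of_step_bound _ (x + 1)).
  intros n. apply ndigamma_seq_step_bound, Hx.
Qed.

Lemma is_lim_seq_abs_le (u : nat -> R) (L M : R) :
  is_lim_seq u L -> (forall n, Rabs (u n) <= M) -> Rabs L <= M.
Proof.
  intros Hu Hb.
  exact (is_lim_seq_le _ (fun _ => M) (Rabs L) M Hb (is_lim_seq_abs _ _ Hu) (is_lim_seq_const M)).
Qed.

Lemma exp_sum_ln_pochR x n : 0 < x ->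
  exp (sum_f_R0 (fun k => ln (x + INR k)) n) = pochR x n.
Proof.
  intros Hx. induction n as [|n IH].
  - simpl. rewrite Rplus_0_r. apply exp_ln, Hx.
  - rewrite tech5, exp_plus, IH, exp_ln; [reflexivity |].
    pose proof (pos_INR (S n)). lra.
Qed.

Lemma rgamma_exp_lrgamma x : 0 < x -> rgamma x = exp (lrgamma x).
Proof.
  intros Hx.
  assert (H : is_lim_seq (fun n => pochR x (S n)
                 / (INR (Factorial.fact (S n)) * exp (x * ln (INR (S n)))))
                (exp (lrgamma x))).
  { apply (is_lim_seq_ext (fun n => exp (lrgamma_seq x n))).
    - intros n. unfold lrgamma_seq, Rminus.
      rewrite !exp_plus, !exp_Ropp, exp_sum_ln_pochR, exp_ln by
        (apply lt_0_INR, Factorial.lt_O_fact || exact Hx).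
      field. split; [apply Rgt_not_eq, exp_pos | apply not_0_INR, Factorial.fact_neq_0].
    - apply is_lim_seq_continuous; [apply derivable_continuous_pt, derivable_pt_exp |].
      apply is_lim_seq_lrgamma, Hx. }
  unfold rgamma. rewrite (is_lim_seq_unique _ _ H). reflexivity.
Qed.

Lemma ln_taylor_bound q h : 0 < q -> Rabs h <= q / 2 ->
  Rabs (ln (q + h) - ln q - h / q) <= 2 / q ^ 2 * h ^ 2.
Proof.
  intros Hq Hh. apply Rabs_le_between in Hh.
  destruct (ln_sub_bounds (q + h) q) as [A B]; [lra | lra |].
  replace (q + h - q) with h in A, B by ring.
  assert (E : h / q - h / (q + h) = h ^ 2 / (q * (q + h))) by (field; lra).
  assert (P : 0 <= h ^ 2 / (q * (q + h))).
  { apply Rmult_le_pos; [apply pow2_ge_0 | left; apply Rinv_0_lt_compat; nra]. }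
  assert (F : h ^ 2 / (q * (q + h)) <= 2 / q ^ 2 * h ^ 2).
  { replace (2 / q ^ 2 * h ^ 2) with (h ^ 2 / (q * (q / 2))) by (field; lra).
    apply Rmult_le_compat_l; [apply pow2_ge_0 |].
    apply Rinv_le_contravar; [nra |]. apply Rmult_le_compat_l; lra. }
  apply Rabs_le; split; lra.
Qed.

Lemma sum_inv_sq_le y N : 0 < y ->
  sum_f_R0 (fun k => / (y + INR k) ^ 2) N <= / y ^ 2 + / y.
Proof.
  intros Hy.
  assert (H : forall n, sum_f_R0 (fun k => / (y + INR k) ^ 2) n <= / y ^ 2 + / y - / (y + INR n)).
  { intros n. induction n as [|n IH].
    - cbn [sum_f_R0 INR]. rewrite Rplus_0_r. lra.
    - rewrite tech5, S_INR. pose proof (pos_INR n).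
      assert (/ (y + (INR n + 1)) ^ 2 <= / (y + INR n) - / (y + (INR n + 1))).
      { replace (/ (y + INR n) - / (y + (INR n + 1)))
          with (/ ((y + INR n) * (y + (INR n + 1)))) by (field; lra).
        apply Rinv_le_contravar; [apply Rmult_lt_0_compat; lra |].
        nra. }
      lra. }
  pose proof (H N). pose proof (pos_INR N).
  assert (0 < / (y + INR N)) by (apply Rinv_0_lt_compat; lra). lra.
Qed.

Lemma lrgamma_taylor x h : 0 < x -> Rabs h <= x / 2 ->
  Rabs (lrgamma (x + h) - lrgamma x - h * ndigamma x) <= 2 * (/ x ^ 2 + / x) * h ^ 2.
Proof.
  intros Hx Hh. pose proof (proj1 (Rabs_le_between _ _) Hh) as Hh'.
  apply (is_lim_seq_abs_le
           (fun n => lrgamma_seq (x + h) n - lrgamma_seq x n - h * ndigamma_seq x n)).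
  { apply is_lim_seq_minus'; [apply is_lim_seq_minus'; apply is_lim_seq_lrgamma; lra |].
    exact (is_lim_seq_scal_l _ h _ (is_lim_seq_ndigamma x Hx)). }
  intros n.
  assert (E : forall N,
    sum_f_R0 (fun k => ln (x + h + INR k) - ln (x + INR k) - h / (x + INR k)) N
    = sum_f_R0 (fun k => ln (x + h + INR k)) N - sum_f_R0 (fun k => ln (x + INR k)) N
      - h * sum_f_R0 (fun k => / (x + INR k)) N).
  { intros N. induction N as [|N IH]; simpl; [| rewrite IH]; unfold Rdiv; ring. }
  replace (lrgamma_seq (x + h) n - lrgamma_seq x n - h * ndigamma_seq x n)
    with (sum_f_R0 (fun k => ln (x + h + INR k) - ln (x + INR k) - h / (x + INR k)) (S n))
    by (rewrite E; unfold lrgamma_seq, ndigamma_seq; ring).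
  eapply Rle_trans; [apply sum_f_R0_triangle |].
  apply Rle_trans with (2 * sum_f_R0 (fun k => / (x + INR k) ^ 2) (S n) * h ^ 2).
  2:{ apply Rmult_le_compat_r; [apply pow2_ge_0 |].
      apply Rmult_le_compat_l; [lra | apply sum_inv_sq_le, Hx]. }
  replace (2 * sum_f_R0 (fun k => / (x + INR k) ^ 2) (S n) * h ^ 2)
    with ((2 * h ^ 2) * sum_f_R0 (fun k => / (x + INR k) ^ 2) (S n)) by ring.
  rewrite scal_sum.
  apply sum_Rle. intros k _. pose proof (pos_INR k).
  replace (x + h + INR k) with (x + INR k + h) by ring.
  eapply Rle_trans; [apply ln_taylor_bound; lra |]. unfold Rdiv. lra.
Qed.

Lemma is_derive_of_quadratic_remainder (f : R -> R) x l C delta : 0 < delta ->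
  (forall h, Rabs h <= delta -> Rabs (f (x + h) - f x - h * l) <= C * h ^ 2) ->
  is_derive f x l.
Proof.
  intros Hd Hf. apply is_derive_Reals. intros eps Heps.
  set (c := Rabs C). assert (Hc : 0 <= c) by apply Rabs_pos.
  assert (Hd' : 0 < Rmin delta (eps / (c + 1)))
    by (apply Rmin_pos; [lra | apply Rdiv_lt_0_compat; lra]).
  exists (mkposreal _ Hd'). intros h Hh0 Hh. simpl in Hh.
  pose proof (Rmin_l delta (eps / (c + 1))). pose proof (Rmin_r delta (eps / (c + 1))).
  specialize (Hf h ltac:(lra)).
  replace ((f (x + h) - f x) / h - l) with ((f (x + h) - f x - h * l) / h)
    by (field; exact Hh0).
  assert (Ha : 0 < Rabs h) by (apply Rabs_pos_lt, Hh0).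
  unfold Rdiv. rewrite Rabs_mult, Rabs_inv.
  apply (Rmult_lt_reg_r (Rabs h)); [exact Ha |].
  rewrite Rmult_assoc, Rinv_l, Rmult_1_r by lra.
  rewrite <- pow2_abs in Hf.
  assert (Hsmall : Rabs h * (c + 1) < eps).
  { assert (Hh2 : Rabs h < eps / (c + 1)) by lra.
    apply (Rmult_lt_compat_r (c + 1)) in Hh2; [| lra].
    unfold Rdiv in Hh2. rewrite Rmult_assoc, Rinv_l, Rmult_1_r in Hh2 by lra. exact Hh2. }
  assert (Hc2 : C * Rabs h ^ 2 <= c * Rabs h ^ 2)
    by (apply Rmult_le_compat_r; [apply pow2_ge_0 | apply Rle_abs]).
  assert (Rabs h * (Rabs h * (c + 1)) < Rabs h * eps) by (apply Rmult_lt_compat_l; assumption).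
  nra.
Qed.

Lemma is_derive_lrgamma x : 0 < x -> is_derive lrgamma x (ndigamma x).
Proof.
  intros Hx.
  apply (is_derive_of_quadratic_remainder _ _ _ (2 * (/ x ^ 2 + / x)) (x / 2)); [lra |].
  intros h Hh. apply lrgamma_taylor; assumption.
Qed.

Lemma is_derive_rgamma x : 0 < x -> is_derive rgamma x (rgamma x * ndigamma x).
Proof.
  intros Hx.
  apply (is_derive_ext_loc (fun t => exp (lrgamma t))).
  - apply (filter_imp (fun t => 0 < t)); [| apply (open_gt 0), Hx].
    intros t Ht. symmetry. apply rgamma_exp_lrgamma, Ht.
  - rewrite rgamma_exp_lrgamma, Rmult_comm by exact Hx.
    apply (is_derive_comp exp lrgamma x).
    + apply is_derive_Reals, derivable_pt_lim_exp.
    + apply is_derive_lrgamma, Hx.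
Qed.

Lemma gratio_exp a b : 0 < a -> 0 < b -> gratio a b = exp (lrgamma b - lrgamma a).
Proof.
  intros Ha Hb. unfold gratio, Rminus.
  rewrite !rgamma_exp_lrgamma, exp_plus, exp_Ropp by assumption. reflexivity.
Qed.

Lemma gratio_psi_eq a b : 0 < a -> 0 < b ->
  gratio_psi a b = gratio a b * (ndigamma b - ndigamma a).
Proof.
  intros Ha Hb. unfold gratio_psi, gratio.
  rewrite (is_derive_unique _ _ _ (is_derive_rgamma a Ha)),
          (is_derive_unique _ _ _ (is_derive_rgamma b Hb)).
  assert (rgamma a <> 0) by (rewrite rgamma_exp_lrgamma by exact Ha; apply Rgt_not_eq, exp_pos).
  field. assumption.
Qed.

Lemma sum_inv_shift_bounds y N : 0 < y ->
  ln (y + INR N + 1) - ln y <= sum_f_R0 (fun k => / (y + INR k)) N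
  <= / y + (ln (y + INR N) - ln y).
Proof.
  intros Hy. induction N as [|N IH].
  - cbn [sum_f_R0 INR]. rewrite Rplus_0_r.
    destruct (ln_sub_bounds (y + 1) y) as [_ A]; [lra | lra |].
    replace ((y + 1 - y) / y) with (/ y) in A by (field; lra). lra.
  - rewrite tech5, S_INR. pose proof (pos_INR N).
    destruct IH as [I1 I2].
    destruct (ln_sub_bounds (y + (INR N + 1) + 1) (y + INR N + 1)) as [_ A]; [lra | lra |].
    destruct (ln_sub_bounds (y + (INR N + 1)) (y + INR N)) as [B _]; [lra | lra |].
    replace ((y + (INR N + 1) + 1 - (y + INR N + 1)) / (y + INR N + 1))
      with (/ (y + (INR N + 1))) in A by (field; lra).
    replace ((y + (INR N + 1) - (y + INR N)) / (y + (INR N + 1)))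
      with (/ (y + (INR N + 1))) in B by (field; lra).
    replace (y + INR N + 1) with (y + (INR N + 1)) in * by ring.
    lra.
Qed.

Lemma lrgamma_seq_sub a b n : lrgamma_seq b n - lrgamma_seq a n =
  sum_f_R0 (fun k => ln (b + INR k) - ln (a + INR k)) (S n) + (a - b) * ln (INR (S n)).
Proof. rewrite minus_sum. unfold lrgamma_seq. ring. Qed.

Lemma lrgamma_sub_le a b : 0 < b < a -> lrgamma b - lrgamma a <= (a - b) * ln a.
Proof.
  intros [Hb Hab].
  apply (is_lim_seq_le (fun n => lrgamma_seq b n - lrgamma_seq a n) (fun _ => (a - b) * ln a)
           (lrgamma b - lrgamma a) ((a - b) * ln a));
    [| apply is_lim_seq_minus'; apply is_lim_seq_lrgamma; lra | apply is_lim_seq_const].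
  intros n. rewrite lrgamma_seq_sub.
  assert (S1 : sum_f_R0 (fun k => ln (b + INR k) - ln (a + INR k)) (S n)
               <= sum_f_R0 (fun k => / (a + INR k) * (b - a)) (S n)).
  { apply sum_Rle. intros k _. pose proof (pos_INR k).
    destruct (ln_sub_bounds (b + INR k) (a + INR k)) as [_ B]; [lra | lra |].
    replace (b + INR k - (a + INR k)) with (b - a) in B by ring. unfold Rdiv in B. lra. }
  rewrite <- scal_sum in S1.
  destruct (sum_inv_shift_bounds a (S n)) as [H1 _]; [lra |].
  assert (H2 : ln (INR (S n)) <= ln (a + INR (S n) + 1)).
  { pose proof (pos_INR (S n)). apply ln_le; [apply lt_0_INR; lia | lra]. }
  apply (Rmult_le_compat_l (a - b)) in H1, H2; lra.
Qed.

Lemma lrgamma_sub_ge a b : 0 < b < a -> (a - b) * (ln b - / b) <= lrgamma b - lrgamma a.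
Proof.
  intros [Hb Hab].
  set (C := (a - b) * (ln b - / b)). set (D := (a - b) * b).
  assert (Hlow : is_lim_seq (fun n => C - D * / INR (S n)) (C - D * 0)).
  { apply is_lim_seq_minus'; [apply is_lim_seq_const |].
    exact (is_lim_seq_scal_l _ D _ is_lim_seq_inv_INR_S). }
  rewrite Rmult_0_r, Rminus_0_r in Hlow.
  apply (is_lim_seq_le (fun n => C - D * / INR (S n)) (fun n => lrgamma_seq b n - lrgamma_seq a n) C (lrgamma b - lrgamma a));
    [| exact Hlow | apply is_lim_seq_minus'; apply is_lim_seq_lrgamma; lra].
  intros n. rewrite lrgamma_seq_sub.
  assert (S1 : sum_f_R0 (fun k => / (b + INR k) * (b - a)) (S n)
               <= sum_f_R0 (fun k => ln (b + INR k) - ln (a + INR k)) (S n)).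
  { apply sum_Rle. intros k _. pose proof (pos_INR k).
    destruct (ln_sub_bounds (b + INR k) (a + INR k)) as [B _]; [lra | lra |].
    replace (b + INR k - (a + INR k)) with (b - a) in B by ring. unfold Rdiv in B. lra. }
  rewrite <- scal_sum in S1.
  destruct (sum_inv_shift_bounds b (S n)) as [_ H1]; [lra |].
  assert (Hs : 0 < INR (S n)) by (apply lt_0_INR; lia).
  destruct (ln_sub_bounds (INR (S n)) (b + INR (S n))) as [H2 _]; [lra | lra |].
  replace ((INR (S n) - (b + INR (S n))) / INR (S n)) with (- (b * / INR (S n))) in H2
    by (field; lra).
  apply (Rmult_le_compat_l (a - b)) in H1, H2; try lra.
  unfold C, D. lra.
Qed.

Lemma ndigamma_sub_abs_le a b : 0 < b < a ->
  Rabs (ndigamma b - ndigamma a) <= (a - b) * (/ b ^ 2 + / b).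
Proof.
  intros [Hb Hab].
  apply (is_lim_seq_abs_le (fun n => ndigamma_seq b n - ndigamma_seq a n));
    [apply is_lim_seq_minus'; apply is_lim_seq_ndigamma; lra |].
  intros n.
  replace (ndigamma_seq b n - ndigamma_seq a n)
    with (sum_f_R0 (fun k => / (b + INR k) - / (a + INR k)) (S n))
    by (rewrite minus_sum; unfold ndigamma_seq; ring).
  eapply Rle_trans; [apply sum_f_R0_triangle |].
  eapply Rle_trans; [| apply Rmult_le_compat_l, (sum_inv_sq_le b (S n) Hb); lra].
  rewrite scal_sum. apply sum_Rle. intros k _. pose proof (pos_INR k).
  replace (/ (b + INR k) - / (a + INR k)) with ((a - b) * / ((b + INR k) * (a + INR k)))
    by (field; lra).
  rewrite Rmult_comm, Rabs_mult, Rabs_pos_eq, Rabs_pos_eq by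
    (lra || (left; apply Rinv_0_lt_compat, Rmult_lt_0_compat; lra)).
  apply Rmult_le_compat_r; [lra |].
  apply Rinv_le_contravar; [apply pow_lt; lra | nra].
Qed.

Lemma gratio_pos_le_Rpower a s : 0 < s < a -> 0 < gratio a (a - s) <= Rpower a s.
Proof.
  intros [Hs Ha]. rewrite gratio_exp by lra. split; [apply exp_pos |].
  apply exp_le_exp.
  pose proof (lrgamma_sub_le a (a - s) ltac:(lra)) as H.
  replace (a - (a - s)) with s in H by ring. exact H.
Qed.

Lemma gratio_ge_Rpower a p : 0 < p -> 2 * p <= a ->
  Rpower a p / (exp 1 * Rpower 2 p) <= gratio a (a - p).
Proof.
  intros Hp Ha. rewrite gratio_exp by lra.
  unfold Rpower, Rdiv. rewrite <- exp_plus, <- exp_Ropp, <- exp_plus.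
  apply exp_le_exp.
  pose proof (lrgamma_sub_ge a (a - p) ltac:(lra)) as H.
  replace (a - (a - p)) with p in H by ring.
  assert (H1 : ln a - ln 2 <= ln (a - p)).
  { rewrite <- ln_div by lra. apply ln_le; [apply Rdiv_lt_0_compat |]; lra. }
  assert (H2 : p * / (a - p) <= 1).
  { apply (Rmult_le_reg_r (a - p)); [lra |]. rewrite Rmult_assoc, Rinv_l by lra. lra. }
  apply (Rmult_le_compat_l p) in H1; lra.
Qed.

Lemma gratio_psi_abs_le_Rpower a s : 0 < s -> 2 * s <= a ->
  Rabs (gratio_psi a (a - s)) <= (/ s + 1) * Rpower a s.
Proof.
  intros Hs Ha. rewrite gratio_psi_eq, Rabs_mult by lra.
  destruct (gratio_pos_le_Rpower a s ltac:(lra)) as [G1 G2].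
  rewrite Rabs_pos_eq, Rmult_comm by lra.
  apply Rmult_le_compat; try lra; [apply Rabs_pos |].
  eapply Rle_trans; [apply ndigamma_sub_abs_le; lra |].
  replace (a - (a - s)) with s by ring.
  assert (/ (a - s) <= / s) by (apply Rinv_le_contravar; lra).
  assert (/ (a - s) ^ 2 <= / s ^ 2) by (apply Rinv_le_contravar; [apply pow_lt | apply pow_incr]; lra).
  replace (/ s + 1) with (s * (/ s ^ 2 + / s)) by (field; lra).
  apply Rmult_le_compat_l; lra.
Qed.

Lemma Rpower_eventually_ge p M : 0 < p ->
  Rbar_locally p_infty (fun a => M <= Rpower a p).
Proof.
  intros Hp. exists (exp (M / p)). intros a Ha.
  assert (Hln : M / p < ln a).
  { rewrite <- (ln_exp (M / p)). apply ln_increasing; [apply exp_pos | exact Ha]. }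
  apply (Rmult_lt_compat_l p) in Hln; [| exact Hp].
  replace (p * (M / p)) with M in Hln by (field; lra).
  unfold Rpower. pose proof (exp_ineq1_le (p * ln a)). lra.
Qed.

Lemma Rpower_little_o s p C eps : s < p -> 0 < eps ->
  Rbar_locally p_infty (fun a => C * Rpower a s <= eps * Rpower a p).
Proof.
  intros Hsp He.
  apply (filter_imp (fun a => C / eps <= Rpower a (p - s))); [| apply Rpower_eventually_ge; lra].
  intros a Ha.
  apply (Rmult_le_compat_l eps) in Ha; [| lra].
  replace (eps * (C / eps)) with C in Ha by (field; lra).
  replace p with (s + (p - s)) by ring. rewrite Rpower_plus.
  rewrite (Rmult_comm (Rpower a s)), <- Rmult_assoc.
  apply Rmult_le_compat_r; [left; apply exp_pos | exact Ha].
Qed.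

(* A sum  sum_i d_i h(alpha_i)  is kept as the list of pairs (d_i, alpha_i), so that terms
   with equal exponents can be merged. *)
Fixpoint wsum (h : R -> R) (l : list (R * R)) : R :=
  match l with
  | nil => 0
  | (c, s) :: t => c * h s + wsum h t
  end.

Lemma wsum_little_o (h : R -> R -> R) p l :
  (forall c s, In (c, s) l -> forall eps, 0 < eps ->
     Rbar_locally p_infty (fun a => Rabs (h a s) <= eps * Rpower a p)) ->
  forall eps, 0 < eps ->
  Rbar_locally p_infty (fun a => Rabs (wsum (h a) l) <= eps * Rpower a p).
Proof.
  induction l as [|[c s] t IH]; intros Hl eps He.
  - apply filter_forall. intros a. simpl. rewrite Rabs_R0.
    apply Rmult_le_pos; [lra | left; apply exp_pos].
  - set (e1 := eps / (2 * (Rabs c + 1))).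
    pose proof (Rabs_pos c) as Hc0.
    assert (He1 : 0 < e1) by (apply Rdiv_lt_0_compat; lra).
    assert (Hc : Rabs c * e1 <= eps / 2).
    { replace (eps / 2) with ((Rabs c + 1) * e1) by (unfold e1; field; lra).
      apply Rmult_le_compat_r; lra. }
    apply (filter_imp (fun a => Rabs (h a s) <= e1 * Rpower a p
                                /\ Rabs (wsum (h a) t) <= eps / 2 * Rpower a p)).
    + intros a [H1 H2]. simpl.
      assert (HP : 0 < Rpower a p) by apply exp_pos.
      apply (Rmult_le_compat_l (Rabs c)) in H1; [| exact Hc0].
      apply (Rmult_le_compat_r (Rpower a p)) in Hc; [| lra].
      pose proof (Rabs_triang (c * h a s) (wsum (h a) t)).
      rewrite Rabs_mult in *. lra.
    + apply filter_and.
      * apply (Hl c s); [left; reflexivity | exact He1].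
      * apply IH; [intros c' s' Hin; apply (Hl c' s'); right; exact Hin | lra].
Qed.

Lemma wsum_filter (f : R * R -> bool) h l :
  wsum h l = wsum h (filter f l) + wsum h (filter (fun cs => negb (f cs)) l).
Proof.
  induction l as [|[c s] t IH]; simpl; [ring |].
  destruct (f (c, s)); simpl; rewrite IH; ring.
Qed.

Lemma wsum_const_snd h p l : (forall c s, In (c, s) l -> s = p) ->
  wsum h l = wsum (fun _ => 1) l * h p.
Proof.
  induction l as [|[c s] t IH]; intros Hl; simpl; [ring |].
  rewrite (Hl c s (or_introl eq_refl)), IH by (intros c' s' Hin; apply (Hl c' s'); right; exact Hin).
  ring.
Qed.

Lemma exists_max_snd (l : list (R * R)) : l <> nil ->
  exists c p, In (c, p) l /\ forall c' s, In (c', s) l -> s <= p.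
Proof.
  induction l as [|[c0 s0] t IH]; intros Hl; [congruence |].
  destruct t as [|cs t].
  - exists c0, s0. split; [left; reflexivity |].
    intros c' s [E | []]. injection E as <- <-. lra.
  - destruct IH as [c [p [Hin Hmax]]]; [discriminate |].
    destruct (Rle_dec s0 p).
    + exists c, p. split; [right; exact Hin |].
      intros c' s [E | H]; [injection E as <- <-; lra | exact (Hmax c' s H)].
    + exists c0, s0. split; [left; reflexivity |].
      intros c' s [E | H]; [injection E as <- <-; lra | specialize (Hmax c' s H); lra].
Qed.

Lemma wsum_leading_term (l : list (R * R)) :
  (forall c s, In (c, s) l -> 0 < s) ->
  (forall h, wsum h l = 0) \/
  exists c p l', c <> 0 /\ 0 < p /\ (forall c' s, In (c', s) l' -> 0 < s < p) /\
    forall h, wsum h l = c * h p + wsum h l'.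
Proof.
  (* Collect the terms with the largest exponent; if their coefficients cancel, recurse on
     the strictly shorter remainder. *)
  remember (length l) as n eqn:Hn. revert l Hn.
  induction n as [n IH] using (well_founded_induction Wf_nat.lt_wf).
  intros l Hn Hpos.
  destruct l as [|cs t]; [left; reflexivity |].
  destruct (exists_max_snd (cs :: t)) as [c0 [p [Hin Hmax]]]; [discriminate |].
  set (at_p := fun cs : R * R => if Req_EM_T (snd cs) p then true else false).
  set (top := filter at_p (cs :: t)).
  set (rest := filter (fun cs => negb (at_p cs)) (cs :: t)).
  assert (Hsplit : forall h, wsum h (cs :: t) = wsum (fun _ => 1) top * h p + wsum h rest).
  { intros h. rewrite (wsum_filter at_p). f_equal. apply wsum_const_snd.
    intros c s Hcs. apply filter_In in Hcs as [_ Hs]. unfold at_p in Hs; simpl in Hs.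
    destruct (Req_EM_T s p); [assumption | discriminate]. }
  assert (Hrest : forall c s, In (c, s) rest -> 0 < s < p).
  { intros c s Hcs. apply filter_In in Hcs as [Hcs Hs]. unfold at_p in Hs; simpl in Hs.
    destruct (Req_EM_T s p); [discriminate |].
    split; [exact (Hpos c s Hcs) |]. specialize (Hmax c s Hcs). lra. }
  destruct (Req_dec (wsum (fun _ => 1) top) 0) as [Hc | Hc].
  - assert (Htop : In (c0, p) top).
    { apply filter_In. split; [exact Hin |]. unfold at_p; simpl.
      destruct (Req_EM_T p p); [reflexivity | congruence]. }
    assert (Hlen : (length rest < n)%nat).
    { assert (Hnil : (0 < length top)%nat) by (destruct top; [destruct Htop | simpl; lia]).
      subst n. rewrite <- (filter_length at_p (cs :: t)). fold top rest. lia. }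
    assert (Hpos' : forall c s, In (c, s) rest -> 0 < s)
      by (intros c s Hcs; apply Hrest in Hcs; lra).
    destruct (IH _ Hlen rest eq_refl Hpos') as [Hzero | (c & q & l' & Hc' & Hq & Hl' & Hdec)].
    + left. intros h. rewrite Hsplit, Hc, Hzero. ring.
    + right. exists c, q, l'. do 3 (split; [assumption |]).
      intros h. rewrite Hsplit, Hc, Hdec. ring.
  - right. exists (wsum (fun _ => 1) top), p, rest.
    split; [exact Hc |]. split; [exact (Hpos c0 p Hin) |]. split; [exact Hrest | exact Hsplit].
Qed.

Lemma Rbar_locally_p_infty_ge M : Rbar_locally p_infty (fun a => M <= a).
Proof. exists M. intros a Ha. lra. Qed.

Lemma wsum_gratio_little_o p l : (forall c s, In (c, s) l -> 0 < s < p) ->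
  forall eps, 0 < eps -> Rbar_locally p_infty (fun a =>
    Rabs (wsum (fun s => gratio a (a - s)) l) <= eps * Rpower a p /\
    Rabs (wsum (fun s => gratio_psi a (a - s)) l) <= eps * Rpower a p).
Proof.
  intros Hl eps He. apply filter_and.
  - apply (wsum_little_o (fun a s => gratio a (a - s))); [| exact He].
    intros c s Hin e He'. destruct (Hl c s Hin) as [Hs Hsp].
    generalize (filter_and _ _ (Rbar_locally_p_infty_ge (2 * s))
                  (Rpower_little_o s p 1 e Hsp He')).
    apply filter_imp. intros a [Ha H].
    destruct (gratio_pos_le_Rpower a s ltac:(lra)) as [G1 G2].
    rewrite Rabs_pos_eq by lra. lra.
  - apply (wsum_little_o (fun a s => gratio_psi a (a - s))); [| exact He].
    intros c s Hin e He'. destruct (Hl c s Hin) as [Hs Hsp].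
    generalize (filter_and _ _ (Rbar_locally_p_infty_ge (2 * s))
                  (Rpower_little_o s p (/ s + 1) e Hsp He')).
    apply filter_imp. intros a [Ha H].
    pose proof (gratio_psi_abs_le_Rpower a s Hs Ha). lra.
Qed.

Lemma leading_gratio_growth c p l : c <> 0 -> 0 < p ->
  (forall c' s, In (c', s) l -> 0 < s < p) ->
  exists kap K, 0 < kap /\
    Rbar_locally p_infty (fun a =>
      kap * Rpower a p <= Rabs (c * gratio a (a - p) + wsum (fun s => gratio a (a - s)) l) /\
      Rabs (c * gratio_psi a (a - p) + wsum (fun s => gratio_psi a (a - s)) l)
        <= K * Rpower a p).
Proof.
  intros Hc Hp Hl.
  set (k0 := / (exp 1 * Rpower 2 p)).
  assert (Hk0 : 0 < k0) by (apply Rinv_0_lt_compat, Rmult_lt_0_compat; apply exp_pos).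
  assert (Hca : 0 < Rabs c) by (apply Rabs_pos_lt, Hc).
  set (kap := Rabs c * k0 / 2).
  assert (Hkap : 0 < kap) by (apply Rdiv_lt_0_compat; [apply Rmult_lt_0_compat |]; lra).
  exists kap, (Rabs c * (/ p + 1) + kap). split; [exact Hkap |].
  generalize (filter_and _ _ (Rbar_locally_p_infty_ge (2 * p))
                (wsum_gratio_little_o p l Hl kap Hkap)).
  apply filter_imp. intros a (Ha & H1 & H2).
  assert (HP : 0 < Rpower a p) by apply exp_pos.
  split.
  - pose proof (gratio_ge_Rpower a p Hp Ha) as L. unfold Rdiv in L. fold k0 in L.
    assert (Hlead : Rabs c * (Rpower a p * k0) <= Rabs (c * gratio a (a - p))).
    { rewrite Rabs_mult. apply Rmult_le_compat_l; [lra |].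
      eapply Rle_trans; [exact L | apply Rle_abs]. }
    pose proof (Rabs_triang (c * gratio a (a - p) + wsum (fun s => gratio a (a - s)) l)
                            (- wsum (fun s => gratio a (a - s)) l)) as T.
    rewrite Rabs_Ropp in T.
    replace (c * gratio a (a - p) + wsum (fun s => gratio a (a - s)) l
             + - wsum (fun s => gratio a (a - s)) l) with (c * gratio a (a - p)) in T by ring.
    unfold kap in *. lra.
  - pose proof (gratio_psi_abs_le_Rpower a p Hp Ha) as P.
    apply (Rmult_le_compat_l (Rabs c)) in P; [| lra].
    pose proof (Rabs_triang (c * gratio_psi a (a - p)) (wsum (fun s => gratio_psi a (a - s)) l)).
    rewrite Rabs_mult in *. lra.
Qed.

Lemma dominated_divergence {T} (F : (T -> Prop) -> Prop) {FF : Filter F}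
  (g f psi : T -> R) (kap K z : R) : 0 < kap ->
  F (fun t => kap * g t <= Rabs (f t) /\ Rabs (psi t) <= K * g t) ->
  (forall M, F (fun t => M <= g t)) ->
  exists K', 0 <= K' /\ forall M,
    F (fun t => M <= Rabs (f t - z) /\ Rabs (psi t) <= K' * Rabs (f t - z)).
Proof.
  intros Hk Hb Hg.
  assert (HK' : 0 <= 2 * Rabs K / kap)
    by (apply Rmult_le_pos; [pose proof (Rabs_pos K); lra | left; apply Rinv_0_lt_compat, Hk]).
  exists (2 * Rabs K / kap). split; [exact HK' |]. intros M.
  generalize (filter_and _ _ Hb (Hg (2 * (Rabs z + Rabs M) / kap))).
  apply filter_imp. intros t [[H1 H2] H3].
  apply (Rmult_le_compat_l kap) in H3; [| lra].
  replace (kap * (2 * (Rabs z + Rabs M) / kap)) with (2 * (Rabs z + Rabs M)) in H3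
    by (field; lra).
  pose proof (Rabs_pos z). pose proof (Rabs_pos M). pose proof (Rle_abs M).
  pose proof (Rabs_triang_inv (f t) z).
  assert (Hfz : kap * g t / 2 <= Rabs (f t - z)) by lra.
  split; [lra |].
  assert (Hg0 : 0 <= g t) by nra.
  assert (HKg : K * g t <= Rabs K * g t) by (apply Rmult_le_compat_r; [exact Hg0 | apply Rle_abs]).
  replace (Rabs K * g t) with (2 * Rabs K / kap * (kap * g t / 2)) in HKg by (field; lra).
  apply (Rmult_le_compat_l _ _ _ HK') in Hfz. lra.
Qed.

Lemma ex_series_of_eventually_halving (w : nat -> R) :
  (forall n, 0 <= w n) -> eventually (fun n => w (S n) <= w n / 2) -> ex_series w.
Proof.
  intros Hw [N HN].
  assert (Geo : forall k, w (N + k)%nat <= w N * (/ 2) ^ k).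
  { induction k as [|k IH].
    - rewrite Nat.add_0_r. simpl. lra.
    - replace (N + S k)%nat with (S (N + k)) by lia.
      specialize (HN (N + k)%nat ltac:(lia)). simpl. lra. }
  apply (ex_series_incr_n w N).
  apply (@ex_series_le R_AbsRing R_CompleteNormedModule _ (fun k => w N * (/ 2) ^ k)).
  - intros k. change (norm ?z) with (Rabs z). rewrite Rabs_pos_eq by apply Hw. apply Geo.
  - apply (ex_series_scal (w N) (fun k => (/ 2) ^ k)), ex_series_geom. rewrite Rabs_pos_eq; lra.
Qed.

Lemma recurrence_weight_step (u v d b r K : R) : 0 <= K -> 0 <= r ->
  4 * r + 1 <= Rabs d -> Rabs b <= K * Rabs d ->
  (Rabs (- (v + - u / d * b) / d) + (4 * K + 1) * Rabs (- u / d)) * r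
  <= (Rabs v + (4 * K + 1) * Rabs u) / 2.
Proof.
  intros HK Hr Hd Hb.
  pose proof (Rabs_pos u) as Hu0. pose proof (Rabs_pos v) as Hv0.
  set (e := Rabs d) in *.
  assert (He : 0 < e) by lra.
  assert (Hu1 : Rabs (- u / d) = Rabs u / e)
    by (unfold Rdiv; rewrite Rabs_mult, Rabs_Ropp, Rabs_inv; reflexivity).
  assert (Hv1 : Rabs (- (v + - u / d * b) / d) <= (Rabs v + Rabs u * K) / e).
  { unfold Rdiv at 1. rewrite Rabs_mult, Rabs_Ropp, Rabs_inv. fold e.
    apply Rmult_le_compat_r; [left; apply Rinv_0_lt_compat, He |].
    eapply Rle_trans; [apply Rabs_triang |]. rewrite Rabs_mult, Hu1.
    apply Rplus_le_compat_l.
    replace (Rabs u * K) with (Rabs u / e * (K * e)) by (field; lra).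
    apply Rmult_le_compat_l; [apply Rmult_le_pos; [lra | left; apply Rinv_0_lt_compat, He] |].
    exact Hb. }
  assert (Hre : r / e <= / 4).
  { apply (Rmult_le_reg_r e); [exact He |].
    unfold Rdiv. rewrite Rmult_assoc, Rinv_l, Rmult_1_r by lra. lra. }
  rewrite Hu1.
  apply Rle_trans with ((Rabs v + (5 * K + 1) * Rabs u) * (r / e)).
  { replace ((Rabs v + (5 * K + 1) * Rabs u) * (r / e))
      with (((Rabs v + Rabs u * K) / e + (4 * K + 1) * (Rabs u / e)) * r) by (field; lra).
    apply Rmult_le_compat_r; [exact Hr |]. apply Rplus_le_compat_r. exact Hv1. }
  apply Rle_trans with ((Rabs v + (5 * K + 1) * Rabs u) * / 4).
  { apply Rmult_le_compat_l; [nra | exact Hre]. }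
  nra.
Qed.

Lemma ex_series_recurrence (u v D B : nat -> R) (K r : R) : 0 <= K -> 0 <= r ->
  (forall n, u (S n) = - u n / D (S n)) ->
  (forall n, v (S n) = - (v n + u (S n) * B (S n)) / D (S n)) ->
  (forall M, eventually (fun n => M <= Rabs (D n) /\ Rabs (B n) <= K * Rabs (D n))) ->
  ex_series (fun n => u n * r ^ n) /\ ex_series (fun n => v n * r ^ n).
Proof.
  intros HK Hr Hu Hv HD.
  set (w := fun n => (Rabs (v n) + (4 * K + 1) * Rabs (u n)) * r ^ n).
  assert (Hbound : forall n, Rabs (u n * r ^ n) <= w n /\ Rabs (v n * r ^ n) <= w n).
  { intros n. pose proof (Rabs_pos (u n)). pose proof (Rabs_pos (v n)).
    rewrite !Rabs_mult, (Rabs_pos_eq (r ^ n)) by (apply pow_le, Hr).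
    unfold w. split; apply Rmult_le_compat_r; try (apply pow_le, Hr); nra. }
  assert (Hw : ex_series w).
  { apply ex_series_of_eventually_halving.
    - intros n. eapply Rle_trans; [apply Rabs_pos | apply Hbound].
    - destruct (HD (4 * r + 1)) as [N HN]. exists N. intros n Hn.
      destruct (HN (S n) ltac:(lia)) as [H1 H2].
      pose proof (recurrence_weight_step (u n) (v n) (D (S n)) (B (S n)) r K HK Hr H1 H2) as H.
      apply (Rmult_le_compat_r (r ^ n)) in H; [| apply pow_le, Hr].
      unfold w. rewrite Hv, Hu. simpl pow. lra. }
  split; apply (@ex_series_le R_AbsRing R_CompleteNormedModule _ w); try exact Hw;
    intros n; apply Hbound.
Qed.

Fixpoint family (m : nat) (d alpha : nat -> R) : list (R * R) :=
  match m with
  | O => nil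
  | S k => (d k, alpha k) :: family k d alpha
  end.

Lemma sumR_family m d alpha h :
  sumR m (fun i => d i * h (alpha i)) = wsum h (family m d alpha).
Proof. induction m as [|m IH]; simpl; [reflexivity | rewrite IH; ring]. Qed.

Lemma family_snd_pos m d alpha : (forall i, (i < m)%nat -> 0 < alpha i) ->
  forall c s, In (c, s) (family m d alpha) -> 0 < s.
Proof.
  induction m as [|m IH]; intros Hal c s Hin; [destruct Hin |].
  destruct Hin as [E | Hin]; [injection E as <- <-; apply Hal; lia |].
  apply (IH ltac:(intros i Hi; apply Hal; lia) c s Hin).
Qed.

Lemma Gfun_leading_term m d alpha g : (forall i, (i < m)%nat -> 0 < alpha i) ->
  Derive_n (Gfun m d alpha) 2 g <> 0 ->
  exists c p l, c <> 0 /\ 0 < p /\ (forall c' s, In (c', s) l -> 0 < s < p) /\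
    forall h, sumR m (fun i => d i * h (alpha i)) = c * h p + wsum h l.
Proof.
  intros Hal HD.
  destruct (wsum_leading_term _ (family_snd_pos m d alpha Hal))
    as [Hzero | (c & p & l & Hc & Hp & Hl & Hdec)].
  - exfalso. apply HD. rewrite (Derive_n_ext _ (fun _ => 0)); [apply Derive_n_const |].
    intros t. exact (eq_trans (sumR_family m d alpha (fun s => gratio (1 + t) (1 + t - s))) (Hzero _)).
  - exists c, p, l. do 3 (split; [assumption |]).
    intros h. rewrite sumR_family. apply Hdec.
Qed.

Lemma eventually_affine_INR (g b : R) (P : R -> Prop) : 0 < b ->
  Rbar_locally p_infty P -> eventually (fun n => P (g + b * INR n)).
Proof.
  intros Hb [M HM].
  destruct (INR_unbounded ((M - g) / b)) as [N HN].
  exists N. intros n Hn. apply HM.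
  apply le_INR in Hn.
  assert (H : (M - g) / b < INR n) by lra.
  apply (Rmult_lt_compat_l b) in H; [| exact Hb].
  replace (b * ((M - g) / b)) with (M - g) in H by (field; lra). lra.
Qed.

Lemma Rpower_affine x g b n : Rpower x (g + b * INR n) = Rpower x g * Rpower x b ^ n.
Proof. rewrite Rpower_plus, <- Rpower_mult, Rpower_pow; [reflexivity | apply exp_pos]. Qed.

Lemma A_n_B_n_asymptotics m d alpha beta gamma nu :
  (forall i, (i < m)%nat -> 0 < alpha i) -> 0 < beta ->
  Derive_n (Gfun m d alpha) 2 gamma <> 0 ->
  exists K, 0 <= K /\ forall M, eventually (fun n =>
    M <= Rabs (A_n m d alpha beta gamma n - nu ^ 2) /\
    Rabs (B_n m d alpha beta gamma n) <= K * Rabs (A_n m d alpha beta gamma n - nu ^ 2)).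
Proof.
  intros Hal Hb HD2.
  destruct (Gfun_leading_term m d alpha gamma Hal HD2) as (c & p & l & Hc & Hp & Hl & Hdec).
  destruct (leading_gratio_growth c p l Hc Hp Hl) as (kap & K & Hkap & Hgrowth).
  destruct (dominated_divergence _ (fun a => Rpower a p) _ _ kap K (nu ^ 2) Hkap Hgrowth
              (fun M => Rpower_eventually_ge p M Hp)) as (K' & HK' & Hdom).
  exists K'. split; [exact HK' |]. intros M.
  generalize (eventually_affine_INR (1 + gamma) beta _ Hb (Hdom M)).
  apply filter_imp. intros n.
  set (a := 1 + gamma + beta * INR n).
  assert (EA : A_n m d alpha beta gamma n
               = c * gratio a (a - p) + wsum (fun s => gratio a (a - s)) l).
  { unfold A_n, Gfun. replace (1 + (gamma + beta * INR n)) with a by (unfold a; ring).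
    exact (Hdec (fun s => gratio a (a - s))). }
  assert (EB : B_n m d alpha beta gamma n
               = c * gratio_psi a (a - p) + wsum (fun s => gratio_psi a (a - s)) l)
    by exact (Hdec (fun s => gratio_psi a (a - s))).
  rewrite EA, EB. exact (fun H => H).
Qed.

Theorem lemma4p1 (m : nat) (d alpha : nat -> R) (beta nu gamma c10 c20 : R) :
  (forall i, (i < m)%nat -> 0 < alpha i) ->
  0 < beta ->
  -1 < gamma ->
  Gfun m d alpha gamma = nu ^ 2 ->
  Derive (Gfun m d alpha) gamma = 0 ->
  Derive_n (Gfun m d alpha) 2 gamma <> 0 ->
  (forall n : nat, (1 <= n)%nat -> Gfun m d alpha (gamma + beta * INR n) <> nu ^ 2) ->
  forall x : R, 0 < x ->
    ex_series (fun n => coef1 m d alpha beta gamma nu c10 n * Rpower x (gamma + beta * INR n)) /\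
    ex_series (fun n => coef2 m d alpha beta gamma nu c10 c20 n * Rpower x (gamma + beta * INR n)).
Proof.
  intros Hal Hb _ _ _ HD2 _ x _.
  destruct (A_n_B_n_asymptotics m d alpha beta gamma nu Hal Hb HD2) as (K & HK & HAB).
  destruct (ex_series_recurrence (coef1 m d alpha beta gamma nu c10)
              (coef2 m d alpha beta gamma nu c10 c20)
              (fun n => A_n m d alpha beta gamma n - nu ^ 2) (B_n m d alpha beta gamma)
              K (Rpower x beta) HK (Rlt_le _ _ (exp_pos _))
              (fun n => eq_refl) (fun n => eq_refl) HAB) as [S1 S2].
  split; [revert S1 | revert S2]; intros S;
    refine (ex_series_ext _ _ _ (ex_series_scal (Rpower x gamma) _ S));
    intros n; rewrite Rpower_affine; unfold scal; simpl; unfold mult; simpl; ring.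
Qed.
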